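(* Let $A$ be a finite alphabet and let $Z\subseteq A^+$ be a code all of whose words have length at least $2$. If all words of $Z$ begin with the same letter of $A$, or all words of $Z$ end with the same letter of $A$, then $Z$ is an alt-induced code.
   Context: $A^+$ is the set of non-empty words over $A$. A set $Z\subseteq A^+$ is a code if every word admits at most one factorization into words of $Z$. For non-empty $X,Y\subseteq A^+$, $(X,Y)$ is an alternative code if no word of $A^+$ admits two different similar alternative factorizations on $(X,Y)$, where an alternative factorization is a factorization $u_1\cdots u_n$ ($n\ge 2$, $u_i\in X\cup Y$) with consecutive factors alternating between $X$ and $Y$, and two are similar if they begin in the same set and end in the same set; equivalently, $XY$ is a code and each $z\in XY$ has exactly one pair $(x,y)\in X\times Y$ with $z=xy$. $Z$ is an alt-induced code if $Z=XY$ for some alternative code $(X,Y)$. *)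

From mathcomp Require Import all_boot.
Set Implicit Arguments. Unset Strict Implicit. Unset Printing Implicit Defensive.

Section Words.
Variable A : finType.

Definition lang := seq A -> Prop.

Definition in_plus (Z : lang) : Prop := forall w, Z w -> w <> [::].

Definition factors_in (Z : lang) (l : seq (seq A)) : Prop :=
  forall u, u \in l -> Z u.

Definition is_code (Z : lang) : Prop :=
  in_plus Z /\
  forall l1 l2 : seq (seq A),
    factors_in Z l1 -> factors_in Z l2 -> flatten l1 = flatten l2 -> l1 = l2.

Fixpoint alt_fac (X Y : lang) (b : bool) (l : seq (seq A)) : Prop :=
  match l with
  | [::] => True
  | u :: l' => (if b then X u else Y u) /\ alt_fac X Y (~~ b) l'
  end.

(* label (true = X, false = Y) of the set containing the last factor of an
   alternating factorization starting in set b *)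
Definition end_label (b : bool) (l : seq (seq A)) : bool :=
  if odd (size l) then b else ~~ b.

Definition alt_code (X Y : lang) : Prop :=
  (exists x, X x) /\ (exists y, Y y) /\ in_plus X /\ in_plus Y /\
  forall (b : bool) (l1 l2 : seq (seq A)),
    2 <= size l1 -> 2 <= size l2 ->
    alt_fac X Y b l1 -> alt_fac X Y b l2 ->
    end_label b l1 = end_label b l2 ->
    flatten l1 = flatten l2 -> l1 = l2.

Definition prod_lang (X Y : lang) : lang :=
  fun w => exists x y, X x /\ Y y /\ w = x ++ y.

Definition alt_induced (Z : lang) : Prop :=
  exists X Y : lang, alt_code X Y /\ forall w, Z w <-> prod_lang X Y w.

End Words.

From mathcomp Require Import all_boot.
Set Implicit Arguments. Unset Strict Implicit. Unset Printing Implicit Defensive.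

(* If all words of Z begin with the letter a, then Z = {a} Y with Y = a^-1 Z, and
   symmetrically Z = X {a} when they all end with a.  When one side of the product
   is a single word the product is unambiguous, so an alternating factorization of
   even length starting in X is, after grouping consecutive factors in pairs, a
   factorization over the code XY, hence determined by its flattening.  Every other
   kind of alternating factorization is brought to that one by adding or removing
   a factor equal to the single word. *)

Section Cancel.
Variable T : Type.

Lemma catsI (s : seq T) : injective (cat s).
Proof. by move=> u v /(congr1 (drop (size s))); rewrite !drop_size_cat. Qed.

Lemma catIs (s : seq T) : injective (cat^~ s).
Proof.
move=> u v /(congr1 rev); rewrite !rev_cat => /catsI /(congr1 rev).
by rewrite !revK.
Qed.

End Cancel.

Section Alternating.
Variables (A : finType) (X Y : lang A).

Definition unambiguous_prod : Prop :=
  forall x x' y y', X x -> X x' -> Y y -> Y y' ->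
    x ++ y = x' ++ y' -> x = x' /\ y = y'.

Lemma alt_fac_rcons b l u :
  alt_fac X Y b (rcons l u) <->
  alt_fac X Y b l /\ (if (if odd (size l) then ~~ b else b) then X u else Y u).
Proof.
elim: l b => [|v l IH] b /=; first tauto.
by have := IH (~~ b); case: (odd (size l)); case: b => /=; tauto.
Qed.

Lemma end_label_odd b (l1 l2 : seq (seq A)) :
  end_label b l1 = end_label b l2 -> odd (size l1) = odd (size l2).
Proof. by rewrite /end_label; case: b; do 2!case: odd. Qed.

Fixpoint pair_up (l : seq (seq A)) : seq (seq A) :=
  if l is x :: y :: r then (x ++ y) :: pair_up r else [::].

Lemma flatten_pair_up l : ~~ odd (size l) -> flatten (pair_up l) = flatten l.
Proof.
have [n] := ubnP (size l); elim: n l => // n IH [|x [|y r]] //= /ltnW Hr.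
by rewrite negbK => /(IH r Hr) ->; rewrite catA.
Qed.

Lemma pair_up_in_prod l :
  alt_fac X Y true l -> factors_in (prod_lang X Y) (pair_up l).
Proof.
have [n] := ubnP (size l); elim: n l => // n IH [|x [|y r]] //= /ltnW Hr.
move=> [Xx [Yy Hr']] u; rewrite inE => /predU1P [-> | /(IH r Hr Hr') //].
by exists x, y.
Qed.

Lemma pair_up_inj l1 l2 :
  unambiguous_prod -> alt_fac X Y true l1 -> alt_fac X Y true l2 ->
  ~~ odd (size l1) -> ~~ odd (size l2) -> pair_up l1 = pair_up l2 -> l1 = l2.
Proof.
move=> unamb; have [n] := ubnP (size l1).
elim: n l1 l2 => // n IH [|x [|y r]] [|x' [|y' r']] //= /ltnW Hr.
rewrite !negbK => [[Xx [Yy Hr1]] [Xx' [Yy' Hr2]] Or Or' [Exy Er]].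
have [-> ->] := unamb _ _ _ _ Xx Xx' Yy Yy' Exy.
by rewrite (IH r r').
Qed.

Lemma alt_fac_even_inj l1 l2 :
  is_code (prod_lang X Y) -> unambiguous_prod ->
  alt_fac X Y true l1 -> alt_fac X Y true l2 ->
  ~~ odd (size l1) -> ~~ odd (size l2) -> flatten l1 = flatten l2 -> l1 = l2.
Proof.
move=> [_ code] unamb H1 H2 O1 O2 Ef.
apply: pair_up_inj => //; apply: code; try exact: pair_up_in_prod.
by rewrite !flatten_pair_up.
Qed.

Definition alt_fac_inj (b : bool) : Prop :=
  forall l1 l2, alt_fac X Y b l1 -> alt_fac X Y b l2 ->
    odd (size l1) = odd (size l2) -> flatten l1 = flatten l2 -> l1 = l2.

Lemma alt_codeP :
  (exists x, X x) -> (exists y, Y y) -> in_plus X -> in_plus Y ->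
  alt_fac_inj true -> alt_fac_inj false -> alt_code X Y.
Proof.
move=> neX neY pX pY injX injY; do 4!split => //.
move=> [] l1 l2 _ _ H1 H2 /end_label_odd; [exact: injX | exact: injY].
Qed.

End Alternating.

Section SingleWord.
Variable A : finType.

Definition lang1 (u : seq A) : lang A := fun w => w = u.

Lemma alt_code_lang1l (x0 : seq A) (Y : lang A) :
  x0 <> [::] -> (exists y, Y y) -> in_plus Y ->
  is_code (prod_lang (lang1 x0) Y) -> alt_code (lang1 x0) Y.
Proof.
move=> nz0 neY pY code.
have unamb : unambiguous_prod (lang1 x0) Y by move=> x x' y y' -> -> _ _ /catsI.
have even_inj := alt_fac_even_inj code unamb.
have injX : alt_fac_inj (lang1 x0) Y true.
  move=> l1 l2 H1 H2 Eo Ef; case O1: (odd (size l1)); last first.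
    by apply: even_inj; rewrite // -?Eo O1.
  have {Eo} O2 : odd (size l2) by rewrite -Eo.
  (* an odd factorization starting in X ends with the factor x0: strip it *)
  move: H1 H2 Ef O1 O2; case/lastP: l1 => [|r1 u1] //; case/lastP: l2 => [|r2 u2] //.
  rewrite !size_rcons /= => /alt_fac_rcons [H1] + /alt_fac_rcons [H2] + + O1 O2.
  rewrite (negbTE O1) (negbTE O2) /lang1 => -> ->.
  rewrite !flatten_rcons => /catIs Ef.
  by rewrite (even_inj r1 r2).
apply: alt_codeP => //; first by exists x0.
  by move=> x ->.
move=> l1 l2 H1 H2 Eo Ef.
have : x0 :: l1 = x0 :: l2 by apply: injX => //=; rewrite ?Eo ?Ef.
by case.
Qed.

Lemma alt_code_lang1r (X : lang A) (y0 : seq A) :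
  y0 <> [::] -> (exists x, X x) -> in_plus X ->
  is_code (prod_lang X (lang1 y0)) -> alt_code X (lang1 y0).
Proof.
move=> nz0 neX pX code.
have unamb : unambiguous_prod X (lang1 y0) by move=> x x' y y' _ _ -> -> /catIs.
have even_inj := alt_fac_even_inj code unamb.
have injX : alt_fac_inj X (lang1 y0) true.
  move=> l1 l2 H1 H2 Eo Ef; case O1: (odd (size l1)); last first.
    by apply: even_inj; rewrite // -?Eo O1.
  (* complete an odd factorization starting in X by the factor y0 *)
  apply: (@rcons_injl _ y0); apply: even_inj.
  - by apply/alt_fac_rcons; rewrite O1.
  - by apply/alt_fac_rcons; rewrite -Eo O1.
  - by rewrite size_rcons /= O1.
  - by rewrite size_rcons /= -Eo O1.
  - by rewrite !flatten_rcons Ef.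
apply: alt_codeP => //; first by exists y0.
  by move=> y ->.
have nil_neq_y0_cat s : [::] <> y0 ++ s by case: (y0) nz0.
move=> [|u1 r1] [|u2 r2] //=.
- by move=> _ [-> _] _ /nil_neq_y0_cat.
- by move=> [-> _] _ _ /esym /nil_neq_y0_cat.
move=> [-> H1] [-> H2] /negb_inj Eo /catsI Ef.
by rewrite (injX r1 r2).
Qed.

End SingleWord.

Lemma is_code_eq (A : finType) (Z Z' : lang A) :
  (forall w, Z w <-> Z' w) -> is_code Z -> is_code Z'.
Proof.
move=> EZ [pZ code]; split=> [w /EZ /pZ //|l1 l2 H1 H2].
by apply: code => // u; [move/H1 | move/H2] => /EZ.
Qed.

Theorem corollaryC (A : finType) (Z : seq A -> Prop) :
  is_code Z ->
  (exists z, Z z) ->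
  (forall z, Z z -> 2 <= size z) ->
  ((exists a : A, forall z, Z z -> exists s, z = a :: s) \/
   (exists a : A, forall z, Z z -> exists s, z = rcons s a)) ->
  alt_induced Z.
Proof.
move=> code [z0 Zz0] long [[a Ha] | [a Ha]].
- pose Y (y : seq A) := Z (a :: y).
  have EZ w : Z w <-> prod_lang (lang1 [:: a]) Y w.
    split=> [Zw | [_ [y [-> [Yy ->]]]] //].
    by have [s Es] := Ha _ Zw; exists [:: a], s; rewrite /Y -Es.
  exists (lang1 [:: a]), Y; split=> //; apply: alt_code_lang1l => //.
  + by have [s Es] := Ha _ Zz0; exists s; rewrite /Y -Es.
  + by move=> y /long; case: y.
  + exact: is_code_eq code.
- pose X (x : seq A) := Z (rcons x a).
  have EZ w : Z w <-> prod_lang X (lang1 [:: a]) w.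
    split=> [Zw | [x [_ [Xx [-> ->]]]]]; last by rewrite cats1.
    by have [s Es] := Ha _ Zw; exists s, [:: a]; rewrite /X cats1 -Es.
  exists X, (lang1 [:: a]); split=> //; apply: alt_code_lang1r => //.
  + by have [s Es] := Ha _ Zz0; exists s; rewrite /X -Es.
  + by move=> x /long; rewrite size_rcons => /[swap] ->.
  + exact: is_code_eq code.
Qed.
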